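(* In the setting below, let $z_0$ be a singular point of $P$ with $k_1\neq0$, $\phi(z_0)=0$ and $\hat R_{\theta_1'\theta_1'}(z_0)\neq0$. Put $\ell_1=\hat R_{\theta_1'r_2'}(z_0)/\hat R_{\theta_1'\theta_1'}(z_0)$, $\ell_2=\hat R_{\theta_1'\theta_2'}(z_0)/\hat R_{\theta_1'\theta_1'}(z_0)$, and new coordinates $(r_1'',\theta_1'',r_2'',\theta_2'')=(r_1',\theta_1'+\ell_1r_2'+\ell_2\theta_2',r_2',\theta_2')$. Then the Hessian of $\hat R$ with respect to $(\theta_1'',r_2'',\theta_2'')$ at $z_0$ is the diagonal matrix $$\operatorname{diag}\Big(\hat R_{\theta_1'\theta_1'}(z_0),\ -\frac{4(p-1)^2|\mu|^2}{k_1^2\hat R_{\theta_1'\theta_1'}(z_0)},\ 0\Big),\quad\text{where }\hat R_{\theta_1'\theta_1'}(z_0)=\frac{4(p-1)|\mu|^3|u_0|\sin\Theta_1\cos\Theta_2}{k_1^2}.$$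
   Context: Fix integers $p,q\ge2$ and $\mu\in\mathbb{C}\setminus\{0\}$. Let $P(u,v;\mu)=\mu(u^p+\bar u)+v^q+\bar v$, regarded as a smooth map $\mathbb{R}^4\to\mathbb{R}^2$, with $Q=\operatorname{Re}P$, $R=\operatorname{Im}P$. A singular point is a point where the real differential of $P$ has rank $<2$; every singular point $z_0=(u_0,v_0)$ satisfies $u_0v_0\ne0$. Use polar coordinates $r_1=|u|,\theta_1=\arg u,r_2=|v|,\theta_2=\arg v$ near $z_0$. Fix real representatives $\arg u_0,\arg v_0,\arg\mu$ and an integer $\kappa$ with $\frac{p-1}{2}\arg u_0+\arg\mu=\frac{q-1}{2}\arg v_0+\kappa\pi$. Set $\Theta_1=\frac{p+1}{2}\arg u_0$, $\Theta_2=\frac{p-1}{2}\arg u_0+\arg\mu$, $\Theta_3=\frac{q+1}{2}\arg v_0$, $(k_1,k_2,k_3,k_4)=(\partial_{r_1}Q,\partial_{\theta_1}Q,\partial_{r_2}Q,\partial_{\theta_2}Q)(z_0)$, and $\phi(z_0)=(-1)^\kappa(p-1)|v_0|\sin\Theta_3+(q-1)|\mu||u_0|\sin\Theta_1$. When $k_1\ne0$, define coordinates $(r_1',\theta_1',r_2',\theta_2')=(k_1r_1+k_2\theta_1+k_3r_2+k_4\theta_2,\theta_1,r_2,\theta_2)$ near $z_0$, $s=\frac{\partial R}{\partial r_1'}(z_0)$ and $\hat R=R-sQ$; subscripts on $\hat R$ denote partial derivatives in the indicated coordinate system. *)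

From Stdlib Require Import Reals Lra ZArith.
Open Scope R_scope.

Definition cplx := (R * R)%type.
Definition Cadd (z w : cplx) : cplx := (fst z + fst w, snd z + snd w).
Definition Cmul (z w : cplx) : cplx :=
  (fst z * fst w - snd z * snd w, fst z * snd w + snd z * fst w).
Definition Cconj (z : cplx) : cplx := (fst z, - snd z).
Fixpoint Cpow (z : cplx) (n : nat) : cplx :=
  match n with O => (1, 0) | S k => Cmul z (Cpow z k) end.
Definition Cabs (z : cplx) : R := sqrt (fst z ^ 2 + snd z ^ 2).

Definition Pfun (p q : nat) (mu u v : cplx) : cplx :=
  Cadd (Cmul mu (Cadd (Cpow u p) (Cconj u))) (Cadd (Cpow v q) (Cconj v)).

(* Real functions on R^4 = C^2 (coordinates Re u, Im u, Re v, Im v). *)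
Definition Rfun4 := R -> R -> R -> R -> R.
Definition Qre (p q : nat) (mu : cplx) : Rfun4 :=
  fun x1 y1 x2 y2 => fst (Pfun p q mu (x1, y1) (x2, y2)).
Definition Rim (p q : nat) (mu : cplx) : Rfun4 :=
  fun x1 y1 x2 y2 => snd (Pfun p q mu (x1, y1) (x2, y2)).

Definition pd (i : nat) (f : Rfun4) (a b c d l : R) : Prop :=
  match i with
  | 1%nat => derivable_pt_lim (fun t => f t b c d) a l
  | 2%nat => derivable_pt_lim (fun t => f a t c d) b l
  | 3%nat => derivable_pt_lim (fun t => f a b t d) c l
  | 4%nat => derivable_pt_lim (fun t => f a b c t) d l
  | _ => False
  end.

Definition pd2 (i j : nat) (f : Rfun4) (a b c d l : R) : Prop :=
  exists g : Rfun4,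
    (forall a' b' c' d', pd j f a' b' c' d' (g a' b' c' d')) /\
    pd i g a b c d l.

(* z0 = (x1 + i y1, x2 + i y2) is a singular point of P: the real
   differential (2x4 Jacobian of (Q,R)) has rank < 2, i.e. its two rows
   are linearly dependent. *)
Definition singular_point (p q : nat) (mu : cplx) (x1 y1 x2 y2 : R) : Prop :=
  exists a b : R, (a <> 0 \/ b <> 0) /\
    forall i : nat, (1 <= i <= 4)%nat ->
      exists lq lr : R,
        pd i (Qre p q mu) x1 y1 x2 y2 lq /\
        pd i (Rim p q mu) x1 y1 x2 y2 lr /\
        a * lq + b * lr = 0.

Definition polar (f : Rfun4) : Rfun4 :=
  fun r1 t1 r2 t2 => f (r1 * cos t1) (r1 * sin t1) (r2 * cos t2) (r2 * sin t2).

(* In polar coordinates [Q] and [R] are a [u]-part plus a [v]-part, each a combination of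
   [r^n cos (n t)], [r^n sin (n t)], [r cos t], [r sin t]. At a singular point the two Wirtinger
   derivatives of each part have equal modulus, i.e. [p |u0|^(p-1) = 1 = q |v0|^(q-1)]; then every
   first and second derivative of either part at [z0] collapses to a closed form in the half-angles
   [Theta1], [Theta2], [Theta3] (the [v]-part sees [Theta2] shifted by [kappa pi]). In particular
   [s = tan Theta2], so the [u]-part of [R - s Q] has a Hessian [H] mapping the
   [theta1']-direction [(a, 1)] to a multiple of [(1, 0)]; the shear [theta1''] therefore
   decouples [theta1''] from [r2''], [theta2''] exactly. All coordinate changes are affine, so the Hessians are quadratic
   forms in these closed forms, and the theorem reduces to rational identities in which
   [phi(z0) = 0] eliminates [q] and [cos^2 + sin^2 = 1] closes the [(r2'', r2'')] entry. *)

From Stdlib Require Import Reals ZArith Lra Lia FunctionalExtensionality.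
From Coquelicot Require Import Coquelicot.
(* Imported after Coquelicot so that [Cpow] and [Cconj] denote the operations of [Defs]. *)
From Pilot Require Import Defs.
Open Scope R_scope.

(** * Partial derivatives of compositions with affine maps *)

Definition along {A : Type} (j : nat) (f : R -> R -> R -> R -> A) (x1 x2 x3 x4 t : R) : A :=
  match j with
  | 1%nat => f t x2 x3 x4
  | 2%nat => f x1 t x3 x4
  | 3%nat => f x1 x2 t x4
  | _ => f x1 x2 x3 t
  end.

Definition coord (j : nat) (x1 x2 x3 x4 : R) : R :=
  match j with 1%nat => x1 | 2%nat => x2 | 3%nat => x3 | _ => x4 end.

Lemma pd_along j f x1 x2 x3 x4 l : (1 <= j <= 4)%nat ->
  pd j f x1 x2 x3 x4 l <->
  derivable_pt_lim (along j f x1 x2 x3 x4) (coord j x1 x2 x3 x4) l.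
Proof. intros Hj; destruct j as [|[|[|[|[|j]]]]]; try lia; reflexivity. Qed.

Lemma pd_unique i f x1 x2 x3 x4 l l' :
  pd i f x1 x2 x3 x4 l -> pd i f x1 x2 x3 x4 l' -> l = l'.
Proof. destruct i as [|[|[|[|[|i]]]]]; simpl; try tauto; apply uniqueness_limite. Qed.

Lemma pd2_unique i j f x1 x2 x3 x4 l l' :
  pd2 i j f x1 x2 x3 x4 l -> pd2 i j f x1 x2 x3 x4 l' -> l = l'.
Proof.
  intros [g [Hg Hl]] [g' [Hg' Hl']].
  assert (g = g') as <-.
  { do 4 (apply functional_extensionality; intro). eapply pd_unique; eauto. }
  eapply pd_unique; eauto.
Qed.

Lemma pd_plus i f g x1 x2 x3 x4 l l' :
  pd i f x1 x2 x3 x4 l -> pd i g x1 x2 x3 x4 l' ->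
  pd i (fun y1 y2 y3 y4 => f y1 y2 y3 y4 + g y1 y2 y3 y4) x1 x2 x3 x4 (l + l').
Proof. destruct i as [|[|[|[|[|i]]]]]; simpl; try tauto; apply derivable_pt_lim_plus. Qed.

Lemma pd2_plus i j f g x1 x2 x3 x4 l l' :
  pd2 i j f x1 x2 x3 x4 l -> pd2 i j g x1 x2 x3 x4 l' ->
  pd2 i j (fun y1 y2 y3 y4 => f y1 y2 y3 y4 + g y1 y2 y3 y4) x1 x2 x3 x4 (l + l').
Proof.
  intros [df [Hdf Hl]] [dg [Hdg Hl']].
  exists (fun y1 y2 y3 y4 => df y1 y2 y3 y4 + dg y1 y2 y3 y4).
  split; [intros; apply pd_plus; auto | apply pd_plus; auto].
Qed.

Record aff4 := Aff4 { aff_c : R; aff_1 : R; aff_2 : R; aff_3 : R; aff_4 : R }.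

Definition aff_eval (L : aff4) : Rfun4 := fun x1 x2 x3 x4 =>
  aff_c L + aff_1 L * x1 + aff_2 L * x2 + aff_3 L * x3 + aff_4 L * x4.

Definition aff_coef (L : aff4) (j : nat) : R :=
  match j with
  | 1%nat => aff_1 L | 2%nat => aff_2 L | 3%nat => aff_3 L | 4%nat => aff_4 L | _ => 0
  end.

Lemma along_aff L j x1 x2 x3 x4 t : (1 <= j <= 4)%nat ->
  along j (aff_eval L) x1 x2 x3 x4 t =
  aff_eval L x1 x2 x3 x4 + (t - coord j x1 x2 x3 x4) * aff_coef L j.
Proof. intros Hj; destruct j as [|[|[|[|[|j]]]]]; try lia; unfold aff_eval; simpl; ring. Qed.

(* Differentiability along every affine line: exactly what the chain rule for affine changes of
   coordinates needs. *)
Definition line_deriv (f fr ft : R -> R -> R) : Prop :=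
  forall r t a b x, derivable_pt_lim (fun y => f (r + (y - x) * a) (t + (y - x) * b)) x
    (a * fr r t + b * ft r t).

Lemma line_deriv_lincomb f fr ft g gr gt c d :
  line_deriv f fr ft -> line_deriv g gr gt ->
  line_deriv (fun r t => c * f r t + d * g r t)
    (fun r t => c * fr r t + d * gr r t) (fun r t => c * ft r t + d * gt r t).
Proof.
  intros Hf Hg r t a b x.
  eapply derivable_pt_lim_ext with (f := fun y => c * f _ _ + d * g _ _); [reflexivity|].
  replace (a * (c * fr r t + d * gr r t) + b * (c * ft r t + d * gt r t))
    with (c * (a * fr r t + b * ft r t) + d * (a * gr r t + b * gt r t)) by ring.
  apply derivable_pt_lim_plus; apply derivable_pt_lim_scal; auto.
Qed.

Definition compose2 (f : R -> R -> R) (La Lb : aff4) : Rfun4 := fun x1 x2 x3 x4 =>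
  f (aff_eval La x1 x2 x3 x4) (aff_eval Lb x1 x2 x3 x4).

Lemma pd_compose2 f fr ft La Lb j x1 x2 x3 x4 :
  line_deriv f fr ft -> (1 <= j <= 4)%nat ->
  pd j (compose2 f La Lb) x1 x2 x3 x4
    (aff_coef La j * compose2 fr La Lb x1 x2 x3 x4
     + aff_coef Lb j * compose2 ft La Lb x1 x2 x3 x4).
Proof.
  intros Hf Hj. apply pd_along; auto.
  apply derivable_pt_lim_ext with (f := fun y =>
    f (aff_eval La x1 x2 x3 x4 + (y - coord j x1 x2 x3 x4) * aff_coef La j)
      (aff_eval Lb x1 x2 x3 x4 + (y - coord j x1 x2 x3 x4) * aff_coef Lb j)).
  - intros y. rewrite <- !along_aff by auto. destruct j as [|[|[|[|[|j]]]]]; reflexivity.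
  - apply Hf.
Qed.

Definition hess2 (frr frt ftt ai bi aj bj : R) : R :=
  aj * (ai * frr + bi * frt) + bj * (ai * frt + bi * ftt).

Lemma pd2_compose2 f fr ft frr frt ftt La Lb i j x1 x2 x3 x4 :
  line_deriv f fr ft -> line_deriv fr frr frt -> line_deriv ft frt ftt ->
  (1 <= i <= 4)%nat -> (1 <= j <= 4)%nat ->
  pd2 i j (compose2 f La Lb) x1 x2 x3 x4
    (hess2 (compose2 frr La Lb x1 x2 x3 x4) (compose2 frt La Lb x1 x2 x3 x4)
       (compose2 ftt La Lb x1 x2 x3 x4)
       (aff_coef La i) (aff_coef Lb i) (aff_coef La j) (aff_coef Lb j)).
Proof.
  intros Hf Hfr Hft Hi Hj.
  set (aj := aff_coef La j). set (bj := aff_coef Lb j).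
  exists (compose2 (fun r t => aj * fr r t + bj * ft r t) La Lb). split.
  - intros; apply pd_compose2; auto.
  - replace (hess2 _ _ _ _ _ _ _) with
      (aff_coef La i * compose2 (fun r t => aj * frr r t + bj * frt r t) La Lb x1 x2 x3 x4
       + aff_coef Lb i * compose2 (fun r t => aj * frt r t + bj * ftt r t) La Lb x1 x2 x3 x4)
      by (unfold hess2, compose2; ring).
    apply pd_compose2; auto. apply line_deriv_lincomb; auto.
Qed.

(** * The singularity condition *)

Definition Cderiv (f : R -> cplx) (x : R) (l : cplx) : Prop :=
  derivable_pt_lim (fun t => fst (f t)) x (fst l) /\
  derivable_pt_lim (fun t => snd (f t)) x (snd l).

Lemma Cderiv_eq f x l l' : Cderiv f x l -> l = l' -> Cderiv f x l'.
Proof. intros H <-; exact H. Qed.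

Lemma Cderiv_const c x : Cderiv (fun _ => c) x (0, 0).
Proof. split; apply derivable_pt_lim_const. Qed.

Lemma Cderiv_add f g x l l' :
  Cderiv f x l -> Cderiv g x l' -> Cderiv (fun t => Cadd (f t) (g t)) x (Cadd l l').
Proof. intros [Hf1 Hf2] [Hg1 Hg2]; split; apply derivable_pt_lim_plus; auto. Qed.

Lemma Cderiv_mul f g x l l' :
  Cderiv f x l -> Cderiv g x l' ->
  Cderiv (fun t => Cmul (f t) (g t)) x (Cadd (Cmul l (g x)) (Cmul (f x) l')).
Proof.
  intros [Hf1 Hf2] [Hg1 Hg2]; unfold Cmul, Cadd; split; simpl.
  - eapply derivable_pt_lim_ext with (f := fun t => fst (f t) * fst (g t) - snd (f t) * snd (g t));
      [reflexivity|].
    replace (_ + _) with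
      ((fst l * fst (g x) + fst (f x) * fst l') - (snd l * snd (g x) + snd (f x) * snd l')) by ring.
    apply derivable_pt_lim_minus; apply derivable_pt_lim_mult; auto.
  - eapply derivable_pt_lim_ext with (f := fun t => fst (f t) * snd (g t) + snd (f t) * fst (g t));
      [reflexivity|].
    replace (_ + _) with
      ((fst l * snd (g x) + fst (f x) * snd l') + (snd l * fst (g x) + snd (f x) * fst l')) by ring.
    apply derivable_pt_lim_plus; apply derivable_pt_lim_mult; auto.
Qed.

Lemma Cderiv_conj f x l : Cderiv f x l -> Cderiv (fun t => Cconj (f t)) x (Cconj l).
Proof. intros [H1 H2]; split; [exact H1 | apply derivable_pt_lim_opp; exact H2]. Qed.

Definition Cpow_deriv (n : nat) (z l : cplx) : cplx := Cmul (INR n, 0) (Cmul (Cpow z (pred n)) l).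

Lemma Cderiv_pow f x l n : Cderiv f x l -> Cderiv (fun t => Cpow (f t) n) x (Cpow_deriv n (f x) l).
Proof.
  intros Hf; unfold Cpow_deriv; induction n as [|n IH].
  - eapply Cderiv_eq; [apply (Cderiv_const (1, 0))|].
    unfold Cmul; apply injective_projections; simpl; ring.
  - eapply Cderiv_eq; [apply (Cderiv_mul _ _ _ _ _ Hf IH)|].
    rewrite S_INR; destruct n as [|n].
    + unfold Cmul, Cadd; apply injective_projections; simpl; ring.
    + change (Cpow (f x) (S n)) with (Cmul (f x) (Cpow (f x) n)).
      unfold Cmul, Cadd; apply injective_projections; simpl; ring.
Qed.

Lemma Cderiv_Pfun p q mu f g x lf lg : Cderiv f x lf -> Cderiv g x lg ->
  Cderiv (fun t => Pfun p q mu (f t) (g t)) x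
    (Cadd (Cmul mu (Cadd (Cpow_deriv p (f x) lf) (Cconj lf)))
          (Cadd (Cpow_deriv q (g x) lg) (Cconj lg))).
Proof.
  intros Hf Hg. unfold Pfun.
  eapply Cderiv_eq.
  { apply Cderiv_add.
    - apply Cderiv_mul; [apply Cderiv_const|].
      apply Cderiv_add; [apply Cderiv_pow | apply Cderiv_conj]; exact Hf.
    - apply Cderiv_add; [apply Cderiv_pow | apply Cderiv_conj]; exact Hg. }
  unfold Cpow_deriv, Cmul, Cadd; apply injective_projections; simpl; ring.
Qed.

Definition Cnorm2 (z : cplx) : R := fst z ^ 2 + snd z ^ 2.

Lemma Cnorm2_mul z w : Cnorm2 (Cmul z w) = Cnorm2 z * Cnorm2 w.
Proof. unfold Cnorm2, Cmul; simpl; ring. Qed.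

Lemma Cnorm2_pow z n : Cnorm2 (Cpow z n) = Cnorm2 z ^ n.
Proof.
  induction n as [|n IH]; simpl Cpow.
  - unfold Cnorm2; simpl; ring.
  - rewrite Cnorm2_mul, IH; reflexivity.
Qed.

Lemma Cabs_pow_eq_1 n k z : INR n ^ 2 * Cnorm2 z ^ k = 1 -> INR n * Cabs z ^ k = 1.
Proof.
  intros H.
  assert (Hz : Cabs z ^ 2 = Cnorm2 z) by (apply pow2_sqrt; unfold Cnorm2; nra).
  assert (Hpos : 0 <= INR n * Cabs z ^ k)
    by (apply Rmult_le_pos; [apply pos_INR | apply pow_le, sqrt_pos]).
  assert (Hsq : (INR n * Cabs z ^ k) ^ 2 = 1).
  { rewrite Rpow_mult_distr, <- pow_mult, Nat.mul_comm, pow_mult, Hz; exact H. }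
  nra.
Qed.

Lemma det_eq0_of_kernel a b m11 m12 m21 m22 : (a <> 0 \/ b <> 0) ->
  a * m11 + b * m12 = 0 -> a * m21 + b * m22 = 0 -> m11 * m22 - m12 * m21 = 0.
Proof.
  intros Hab E1 E2.
  assert (Ha : a * (m11 * m22 - m12 * m21) = 0).
  { replace (a * _) with ((a * m11 + b * m12) * m22 - (a * m21 + b * m22) * m12) by ring.
    rewrite E1, E2; ring. }
  assert (Hb : b * (m11 * m22 - m12 * m21) = 0).
  { replace (b * _) with ((a * m21 + b * m22) * m11 - (a * m11 + b * m12) * m21) by ring.
    rewrite E1, E2; ring. }
  destruct Hab as [H | H]; [apply Rmult_integral in Ha | apply Rmult_integral in Hb]; tauto.
Qed.

Lemma singular_kernel p q mu x1 y1 x2 y2 a b i D :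
  (forall i, (1 <= i <= 4)%nat -> exists lq lr,
     pd i (Qre p q mu) x1 y1 x2 y2 lq /\ pd i (Rim p q mu) x1 y1 x2 y2 lr /\ a * lq + b * lr = 0) ->
  (1 <= i <= 4)%nat ->
  Cderiv (along i (fun s1 t1 s2 t2 => Pfun p q mu (s1, t1) (s2, t2)) x1 y1 x2 y2)
    (coord i x1 y1 x2 y2) D ->
  a * fst D + b * snd D = 0.
Proof.
  intros H Hi [Dq Dr]. destruct (H i Hi) as (lq & lr & Hq & Hr & E).
  destruct i as [|[|[|[|[|i]]]]]; try lia;
    rewrite <- (uniqueness_limite _ _ _ _ Hq Dq), <- (uniqueness_limite _ _ _ _ Hr Dr); exact E.
Qed.

(* At a singular point the two Wirtinger derivatives [p mu u^(p-1)] and [mu] (resp. [q v^(q-1)]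
   and [1]) have equal moduli. *)
Lemma singular_point_moduli p q mu u v : mu <> (0, 0) ->
  singular_point p q mu (fst u) (snd u) (fst v) (snd v) ->
  INR p * Cabs u ^ pred p = 1 /\ INR q * Cabs v ^ pred q = 1.
Proof.
  intros Hmu [a [b [Hab H]]].
  destruct u as [x1 y1], v as [x2 y2]; simpl fst in H; simpl snd in H.
  assert (Hre : forall x y, Cderiv (fun t => (t, y)) x (1, 0)) by
    (split; [apply derivable_pt_lim_id | apply derivable_pt_lim_const]).
  pose proof (singular_kernel _ _ _ _ _ _ _ _ _ 1 _ H ltac:(lia)
    (Cderiv_Pfun p q mu _ _ _ _ _ (Hre x1 y1) (Cderiv_const (x2, y2) x1))) as K1.
  assert (Him : forall x y, Cderiv (fun t => (x, t)) y (0, 1)) by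
    (split; [apply derivable_pt_lim_const | apply derivable_pt_lim_id]).
  pose proof (singular_kernel _ _ _ _ _ _ _ _ _ 2 _ H ltac:(lia)
    (Cderiv_Pfun p q mu _ _ _ _ _ (Him x1 y1) (Cderiv_const (x2, y2) y1))) as K2.
  pose proof (singular_kernel _ _ _ _ _ _ _ _ _ 3 _ H ltac:(lia)
    (Cderiv_Pfun p q mu _ _ _ _ _ (Cderiv_const (x1, y1) x2) (Hre x2 y2))) as K3.
  pose proof (singular_kernel _ _ _ _ _ _ _ _ _ 4 _ H ltac:(lia)
    (Cderiv_Pfun p q mu _ _ _ _ _ (Cderiv_const (x1, y1) y2) (Him x2 y2))) as K4.
  cbv beta in K1, K2, K3, K4.
  pose proof (det_eq0_of_kernel _ _ _ _ _ _ Hab K1 K2) as Du.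
  pose proof (det_eq0_of_kernel _ _ _ _ _ _ Hab K3 K4) as Dv.
  unfold Cpow_deriv in Du, Dv.
  set (wu := Cpow (x1, y1) (pred p)) in Du.
  set (wv := Cpow (x2, y2) (pred q)) in Dv.
  assert (Eu : Cnorm2 mu * (INR p ^ 2 * Cnorm2 wu - 1) = 0).
  { rewrite <- Du. unfold Cnorm2, Cmul, Cadd, Cconj; simpl; ring. }
  assert (Ev : INR q ^ 2 * Cnorm2 wv - 1 = 0).
  { rewrite <- Dv. unfold Cnorm2, Cmul, Cadd, Cconj; simpl; ring. }
  assert (Hmu2 : Cnorm2 mu <> 0).
  { destruct mu as [m1 m2]; unfold Cnorm2; simpl; intro Z.
    apply Hmu; f_equal; nra. }
  unfold wu, wv in *; rewrite Cnorm2_pow in Eu, Ev.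
  split; apply Cabs_pow_eq_1.
  - apply Rmult_integral in Eu as [E | E]; [contradiction | lra].
  - lra.
Qed.

(** * [Q] and [R] in polar coordinates *)

Record tcoef := TCoef { tc_a : R; tc_b : R; tc_c : R; tc_d : R }.

(* Every real-linear image (e.g. [Re], [Im]) of [a r^n e^(i n t) + b r e^(-i t)] has this form. *)
Definition tpoly (c : tcoef) (n : nat) (r t : R) : R :=
  tc_a c * (r ^ n * cos (INR n * t)) + tc_b c * (r ^ n * sin (INR n * t))
  + tc_c c * (r * cos t) + tc_d c * (r * sin t).
Definition tpoly_r (c : tcoef) (n : nat) (r t : R) : R :=
  tc_a c * (INR n * r ^ pred n * cos (INR n * t)) + tc_b c * (INR n * r ^ pred n * sin (INR n * t))
  + tc_c c * cos t + tc_d c * sin t.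
Definition tpoly_t (c : tcoef) (n : nat) (r t : R) : R :=
  tc_a c * (r ^ n * - (INR n * sin (INR n * t))) + tc_b c * (r ^ n * (INR n * cos (INR n * t)))
  + tc_c c * (r * - sin t) + tc_d c * (r * cos t).
Definition tpoly_rr (c : tcoef) (n : nat) (r t : R) : R :=
  tc_a c * (INR n * (INR (pred n) * r ^ pred (pred n)) * cos (INR n * t))
  + tc_b c * (INR n * (INR (pred n) * r ^ pred (pred n)) * sin (INR n * t)).
Definition tpoly_rt (c : tcoef) (n : nat) (r t : R) : R :=
  tc_a c * (INR n * r ^ pred n * - (INR n * sin (INR n * t)))
  + tc_b c * (INR n * r ^ pred n * (INR n * cos (INR n * t)))
  + tc_c c * - sin t + tc_d c * cos t.
Definition tpoly_tt (c : tcoef) (n : nat) (r t : R) : R :=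
  tc_a c * (r ^ n * - (INR n * (INR n * cos (INR n * t))))
  + tc_b c * (r ^ n * - (INR n * (INR n * sin (INR n * t))))
  + tc_c c * (r * - cos t) + tc_d c * (r * - sin t).

Ltac line_deriv_auto :=
  intros r t a b x; apply is_derive_Reals; auto_derive; auto;
  rewrite Rplus_opp_r, !Rmult_0_l, !Rplus_0_r; ring.

Lemma line_deriv_tpoly c n : line_deriv (tpoly c n) (tpoly_r c n) (tpoly_t c n).
Proof. unfold tpoly, tpoly_r, tpoly_t; line_deriv_auto. Qed.

Lemma line_deriv_tpoly_r c n : line_deriv (tpoly_r c n) (tpoly_rr c n) (tpoly_rt c n).
Proof. unfold tpoly_r, tpoly_rr, tpoly_rt; line_deriv_auto. Qed.

Lemma line_deriv_tpoly_t c n : line_deriv (tpoly_t c n) (tpoly_rt c n) (tpoly_tt c n).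
Proof. unfold tpoly_t, tpoly_rt, tpoly_tt; line_deriv_auto. Qed.

Definition tcoef_comb (c d : tcoef) (s : R) : tcoef :=
  TCoef (tc_a c - s * tc_a d) (tc_b c - s * tc_b d) (tc_c c - s * tc_c d) (tc_d c - s * tc_d d).

Lemma tpoly_comb c d s n r t : tpoly c n r t - s * tpoly d n r t = tpoly (tcoef_comb c d s) n r t.
Proof. unfold tpoly, tcoef_comb; simpl; ring. Qed.

Lemma Cpow_polar r t n :
  Cpow (r * cos t, r * sin t) n = (r ^ n * cos (INR n * t), r ^ n * sin (INR n * t)).
Proof.
  induction n as [|n IH].
  - simpl; rewrite Rmult_0_l, cos_0, sin_0; apply injective_projections; simpl; ring.
  - simpl Cpow; rewrite IH, S_INR.
    replace ((INR n + 1) * t) with (t + INR n * t) by ring.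
    rewrite cos_plus, sin_plus; unfold Cmul; apply injective_projections; simpl; ring.
Qed.

(* Coefficients of the [u]-part of [Re P] and [Im P] in polar coordinates; the [v]-part is the
   case [mu = 1]. *)
Definition qcoef (mu : cplx) : tcoef := TCoef (fst mu) (- snd mu) (fst mu) (snd mu).
Definition rcoef (mu : cplx) : tcoef := TCoef (snd mu) (fst mu) (snd mu) (- fst mu).

Lemma polar_Qre p q mu r1 t1 r2 t2 :
  polar (Qre p q mu) r1 t1 r2 t2 = tpoly (qcoef mu) p r1 t1 + tpoly (qcoef (1, 0)) q r2 t2.
Proof.
  unfold polar, Qre, Pfun; rewrite !Cpow_polar.
  unfold tpoly, qcoef, Cadd, Cmul, Cconj; simpl; ring.
Qed.

Lemma polar_Rim p q mu r1 t1 r2 t2 :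
  polar (Rim p q mu) r1 t1 r2 t2 = tpoly (rcoef mu) p r1 t1 + tpoly (rcoef (1, 0)) q r2 t2.
Proof.
  unfold polar, Rim, Pfun; rewrite !Cpow_polar.
  unfold tpoly, rcoef, Cadd, Cmul, Cconj; simpl; ring.
Qed.

Definition hcoef (s : R) (mu : cplx) : tcoef := tcoef_comb (rcoef mu) (qcoef mu) s.

(** * Derivatives at a critical radius *)

Lemma pow_pred_split n r : (2 <= n)%nat ->
  r ^ n = r * r ^ pred n /\ r ^ pred n = r * r ^ pred (pred n) /\ INR (pred n) = INR n - 1.
Proof.
  intros Hn; destruct n as [|[|k]]; try lia.
  simpl pred; rewrite !S_INR; repeat split; simpl; ring.
Qed.

Lemma crit_radius_neq0 n r : (2 <= n)%nat -> INR n * r ^ pred n = 1 -> r <> 0.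
Proof.
  intros Hn Hcrit Z; destruct (pow_pred_split n r Hn) as (_ & P2 & _).
  rewrite P2, Z, Rmult_0_l, Rmult_0_r in Hcrit; lra.
Qed.

Section CriticalBlock.

Variables (n : nat) (mu : cplx) (m alpha r t Theta Psi : R).
Hypothesis Hmu : mu = (m * cos alpha, m * sin alpha).
Hypothesis HTheta : Theta = (INR n + 1) / 2 * t.
Hypothesis HPsi : Psi = (INR n - 1) / 2 * t + alpha.
Hypothesis Hcrit : INR n * r ^ pred n = 1.
Hypothesis Hn : (2 <= n)%nat.

Lemma crit_angle_sum :
  m * cos alpha * cos (INR n * t) - m * sin alpha * sin (INR n * t) = m * cos (Theta + Psi) /\
  m * sin alpha * cos (INR n * t) + m * cos alpha * sin (INR n * t) = m * sin (Theta + Psi).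
Proof.
  replace (Theta + Psi) with (INR n * t + alpha) by (rewrite HTheta, HPsi; field).
  rewrite cos_plus, sin_plus; split; ring.
Qed.

Lemma crit_angle_diff :
  m * cos alpha * cos t + m * sin alpha * sin t = m * cos (Psi - Theta) /\
  m * sin alpha * cos t - m * cos alpha * sin t = m * sin (Psi - Theta).
Proof.
  replace (Psi - Theta) with (alpha - t) by (rewrite HTheta, HPsi; field).
  rewrite cos_minus, sin_minus; split; ring.
Qed.

Lemma tpoly_r_qcoef_crit : tpoly_r (qcoef mu) n r t = 2 * m * cos Theta * cos Psi.
Proof.
  destruct crit_angle_sum as [E1 _]; destruct crit_angle_diff as [E3 _].
  transitivity (INR n * r ^ pred n
                * (m * cos alpha * cos (INR n * t) - m * sin alpha * sin (INR n * t))
                + (m * cos alpha * cos t + m * sin alpha * sin t)).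
  { unfold tpoly_r, qcoef; rewrite Hmu; simpl; ring. }
  rewrite Hcrit, E1, E3, cos_plus, cos_minus; ring.
Qed.

Lemma tpoly_t_qcoef_crit : tpoly_t (qcoef mu) n r t = - 2 * m * r * sin Theta * cos Psi.
Proof.
  destruct crit_angle_sum as [_ E2]; destruct crit_angle_diff as [_ E4].
  destruct (pow_pred_split n r Hn) as (P1 & _).
  transitivity (- r * (INR n * r ^ pred n)
                * (m * sin alpha * cos (INR n * t) + m * cos alpha * sin (INR n * t))
                + r * (m * sin alpha * cos t - m * cos alpha * sin t)).
  { unfold tpoly_t, qcoef; rewrite Hmu, P1; simpl; ring. }
  rewrite Hcrit, E2, E4, sin_plus, sin_minus; ring.
Qed.

Lemma tpoly_r_rcoef_crit : tpoly_r (rcoef mu) n r t = 2 * m * cos Theta * sin Psi.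
Proof.
  destruct crit_angle_sum as [_ E2]; destruct crit_angle_diff as [_ E4].
  transitivity (INR n * r ^ pred n
                * (m * sin alpha * cos (INR n * t) + m * cos alpha * sin (INR n * t))
                + (m * sin alpha * cos t - m * cos alpha * sin t)).
  { unfold tpoly_r, rcoef; rewrite Hmu; simpl; ring. }
  rewrite Hcrit, E2, E4, sin_plus, sin_minus; ring.
Qed.

Variable s : R.
Hypothesis Hs : s * cos Psi = sin Psi.

Lemma tpoly_rr_hcoef_crit : r * cos Psi * tpoly_rr (hcoef s mu) n r t = m * (INR n - 1) * sin Theta.
Proof.
  destruct crit_angle_sum as [E1 E2]; destruct (pow_pred_split n r Hn) as (_ & P2 & P3).
  transitivity ((INR n - 1) * (INR n * r ^ pred n)
                * (cos Psi * (m * sin alpha * cos (INR n * t) + m * cos alpha * sin (INR n * t))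
                   - s * cos Psi
                     * (m * cos alpha * cos (INR n * t) - m * sin alpha * sin (INR n * t)))).
  { unfold hcoef, tpoly_rr, tcoef_comb, qcoef, rcoef; rewrite Hmu, P2, P3; simpl; ring. }
  rewrite Hcrit, Hs, E1, E2.
  replace (sin Theta) with (sin (Theta + Psi - Psi)) by (f_equal; ring).
  rewrite sin_minus; ring.
Qed.

Lemma tpoly_rt_hcoef_crit : cos Psi * tpoly_rt (hcoef s mu) n r t = m * (INR n - 1) * cos Theta.
Proof.
  destruct crit_angle_sum as [E1 E2]; destruct crit_angle_diff as [E3 E4].
  transitivity (INR n * (INR n * r ^ pred n)
                * (cos Psi * (m * cos alpha * cos (INR n * t) - m * sin alpha * sin (INR n * t))
                   + s * cos Psi
                     * (m * sin alpha * cos (INR n * t) + m * cos alpha * sin (INR n * t)))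
                - (cos Psi * (m * cos alpha * cos t + m * sin alpha * sin t)
                   + s * cos Psi * (m * sin alpha * cos t - m * cos alpha * sin t))).
  { unfold hcoef, tpoly_rt, tcoef_comb, qcoef, rcoef; rewrite Hmu; simpl; ring. }
  rewrite Hcrit, Hs, E1, E2, E3, E4.
  replace (m * (INR n - 1) * cos Theta)
    with (INR n * m * cos (Theta + Psi - Psi) - m * cos (Psi - (Psi - Theta)))
    by (replace (Theta + Psi - Psi) with Theta by ring;
        replace (Psi - (Psi - Theta)) with Theta by ring; ring).
  rewrite !cos_minus; ring.
Qed.

Lemma tpoly_tt_hcoef_crit :
  cos Psi * tpoly_tt (hcoef s mu) n r t = - (m * r * (INR n - 1) * sin Theta).
Proof.
  destruct crit_angle_sum as [E1 E2]; destruct crit_angle_diff as [E3 E4].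
  destruct (pow_pred_split n r Hn) as (P1 & _).
  transitivity (- r * INR n * (INR n * r ^ pred n)
                * (cos Psi * (m * sin alpha * cos (INR n * t) + m * cos alpha * sin (INR n * t))
                   - s * cos Psi
                     * (m * cos alpha * cos (INR n * t) - m * sin alpha * sin (INR n * t)))
                - r * (cos Psi * (m * sin alpha * cos t - m * cos alpha * sin t)
                       - s * cos Psi * (m * cos alpha * cos t + m * sin alpha * sin t))).
  { unfold hcoef, tpoly_tt, tcoef_comb, qcoef, rcoef; rewrite Hmu, P1; simpl; ring. }
  rewrite Hcrit, Hs, E1, E2, E3, E4.
  replace (- (m * r * (INR n - 1) * sin Theta))
    with (- r * INR n * m * sin (Theta + Psi - Psi) - r * m * sin (Psi - Theta - Psi))
    by (replace (Theta + Psi - Psi) with Theta by ring;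
        replace (Psi - Theta - Psi) with (- Theta) by ring; rewrite sin_neg; ring).
  rewrite !sin_minus; ring.
Qed.

End CriticalBlock.

Lemma cos_IZR_PI k : cos (IZR k * PI) = powerRZ (-1) k.
Proof.
  induction k as [|k IH|k IH] using Z.peano_ind.
  - rewrite Rmult_0_l, cos_0; reflexivity.
  - rewrite <- Z.add_1_r, plus_IZR, powerRZ_add, <- IH by lra.
    rewrite Rmult_plus_distr_r, Rmult_1_l, neg_cos; simpl; ring.
  - rewrite <- Z.sub_1_r, <- Z.add_opp_r, plus_IZR, powerRZ_add, <- IH by lra.
    rewrite opp_IZR, Rmult_plus_distr_r, <- Ropp_mult_distr_l, Rmult_1_l.
    rewrite cos_plus, cos_neg, sin_neg, cos_PI, sin_PI; simpl; field.
Qed.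

Lemma sign_IZR_PI_sqr k : powerRZ (-1) k * powerRZ (-1) k = 1.
Proof.
  rewrite <- cos_IZR_PI, <- (sin2_cos2 (IZR k * PI)), sin_eq_0_1 by (exists k; reflexivity).
  unfold Rsqr; ring.
Qed.

Lemma cos_add_IZR_PI x k : cos (x + IZR k * PI) = powerRZ (-1) k * cos x.
Proof.
  rewrite cos_plus, cos_IZR_PI, (sin_eq_0_1 (IZR k * PI)) by (exists k; reflexivity); ring.
Qed.

Lemma sin_add_IZR_PI x k : sin (x + IZR k * PI) = powerRZ (-1) k * sin x.
Proof.
  rewrite sin_plus, cos_IZR_PI, (sin_eq_0_1 (IZR k * PI)) by (exists k; reflexivity); ring.
Qed.

Lemma cos_sin_unshift x y k : y = x + IZR k * PI ->
  cos x = powerRZ (-1) k * cos y /\ sin x = powerRZ (-1) k * sin y.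
Proof.
  intros ->. rewrite cos_add_IZR_PI, sin_add_IZR_PI, <- !Rmult_assoc, sign_IZR_PI_sqr.
  split; ring.
Qed.

Lemma cos_sin_sqr x : cos x ^ 2 + sin x ^ 2 = 1.
Proof. rewrite <- (sin2_cos2 x); unfold Rsqr; ring. Qed.

(** * Changes of coordinates *)

(* [r1] in the primed coordinates [(r1', theta1', r2', theta2')]. *)
Definition primed_r1 (k1 k2 k3 k4 : R) := Aff4 0 (/ k1) (- k2 / k1) (- k3 / k1) (- k4 / k1).

(* An affine form after the substitution [theta1' = theta1'' - l1 r2'' - l2 theta2'']. *)
Definition shear (l1 l2 : R) (L : aff4) : aff4 :=
  Aff4 (aff_c L) (aff_1 L) (aff_2 L) (aff_3 L - aff_2 L * l1) (aff_4 L - aff_2 L * l2).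

Definition X1 := Aff4 0 1 0 0 0.
Definition X2 := Aff4 0 0 1 0 0.
Definition X3 := Aff4 0 0 0 1 0.
Definition X4 := Aff4 0 0 0 0 1.

(* The shape of [Q], [R] and [R - s Q] in each of the three coordinate systems. *)
Definition block_sum (c d : tcoef) (p q : nat) (La Lb : aff4) : Rfun4 := fun x1 x2 x3 x4 =>
  compose2 (tpoly c p) La Lb x1 x2 x3 x4 + compose2 (tpoly d q) X3 X4 x1 x2 x3 x4.

Lemma aff_eval_coords x1 x2 x3 x4 :
  aff_eval X1 x1 x2 x3 x4 = x1 /\ aff_eval X2 x1 x2 x3 x4 = x2 /\
  aff_eval X3 x1 x2 x3 x4 = x3 /\ aff_eval X4 x1 x2 x3 x4 = x4.
Proof. unfold aff_eval; simpl; repeat split; ring. Qed.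

Lemma pd_block_sum c d p q La Lb j x1 x2 x3 x4 r t : (1 <= j <= 4)%nat ->
  aff_eval La x1 x2 x3 x4 = r -> aff_eval Lb x1 x2 x3 x4 = t ->
  pd j (block_sum c d p q La Lb) x1 x2 x3 x4
    (aff_coef La j * tpoly_r c p r t + aff_coef Lb j * tpoly_t c p r t
     + (aff_coef X3 j * tpoly_r d q x3 x4 + aff_coef X4 j * tpoly_t d q x3 x4)).
Proof.
  intros Hj HA HB. destruct (aff_eval_coords x1 x2 x3 x4) as (_ & _ & E3 & E4).
  pose proof (pd_plus _ _ _ _ _ _ _ _ _
    (pd_compose2 _ _ _ La Lb _ x1 x2 x3 x4 (line_deriv_tpoly c p) Hj)
    (pd_compose2 _ _ _ X3 X4 _ x1 x2 x3 x4 (line_deriv_tpoly d q) Hj)) as H.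
  unfold compose2 in H; rewrite HA, HB, E3, E4 in H; exact H.
Qed.

Lemma pd2_block_sum c d p q La Lb i j x1 x2 x3 x4 r t :
  (1 <= i <= 4)%nat -> (1 <= j <= 4)%nat ->
  aff_eval La x1 x2 x3 x4 = r -> aff_eval Lb x1 x2 x3 x4 = t ->
  pd2 i j (block_sum c d p q La Lb) x1 x2 x3 x4
    (hess2 (tpoly_rr c p r t) (tpoly_rt c p r t) (tpoly_tt c p r t)
       (aff_coef La i) (aff_coef Lb i) (aff_coef La j) (aff_coef Lb j)
     + hess2 (tpoly_rr d q x3 x4) (tpoly_rt d q x3 x4) (tpoly_tt d q x3 x4)
       (aff_coef X3 i) (aff_coef X4 i) (aff_coef X3 j) (aff_coef X4 j)).
Proof.
  intros Hi Hj HA HB. destruct (aff_eval_coords x1 x2 x3 x4) as (_ & _ & E3 & E4).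
  pose proof (pd2_plus _ _ _ _ _ _ _ _ _ _
    (pd2_compose2 _ _ _ _ _ _ La Lb _ _ x1 x2 x3 x4 (line_deriv_tpoly c p)
       (line_deriv_tpoly_r c p) (line_deriv_tpoly_t c p) Hi Hj)
    (pd2_compose2 _ _ _ _ _ _ X3 X4 _ _ x1 x2 x3 x4 (line_deriv_tpoly d q)
       (line_deriv_tpoly_r d q) (line_deriv_tpoly_t d q) Hi Hj)) as H.
  unfold compose2 in H; rewrite HA, HB, E3, E4 in H; exact H.
Qed.

Lemma polar_Qre_block p q mu : polar (Qre p q mu) = block_sum (qcoef mu) (qcoef (1, 0)) p q X1 X2.
Proof.
  extensionality r1; extensionality t1; extensionality r2; extensionality t2.
  rewrite polar_Qre; unfold block_sum, compose2.
  destruct (aff_eval_coords r1 t1 r2 t2) as (-> & -> & -> & ->); reflexivity.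
Qed.

Lemma polar_Rim_block p q mu : polar (Rim p q mu) = block_sum (rcoef mu) (rcoef (1, 0)) p q X1 X2.
Proof.
  extensionality r1; extensionality t1; extensionality r2; extensionality t2.
  rewrite polar_Rim; unfold block_sum, compose2.
  destruct (aff_eval_coords r1 t1 r2 t2) as (-> & -> & -> & ->); reflexivity.
Qed.

Lemma polar_hat_block p q mu s (Rhat : Rfun4) :
  (forall r1 t1 r2 t2,
     Rhat r1 t1 r2 t2 = polar (Rim p q mu) r1 t1 r2 t2 - s * polar (Qre p q mu) r1 t1 r2 t2) ->
  Rhat = block_sum (hcoef s mu) (hcoef s (1, 0)) p q X1 X2.
Proof.
  intros H; extensionality r1; extensionality t1; extensionality r2; extensionality t2.
  rewrite H, polar_Qre, polar_Rim; unfold block_sum, compose2, hcoef.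
  destruct (aff_eval_coords r1 t1 r2 t2) as (-> & -> & -> & ->).
  rewrite <- !tpoly_comb; ring.
Qed.

Lemma block_sum_primed (toPrimed : Rfun4 -> Rfun4) k1 k2 k3 k4 c d p q :
  (forall f r1' t1' r2' t2',
     toPrimed f r1' t1' r2' t2' = f ((r1' - k2 * t1' - k3 * r2' - k4 * t2') / k1) t1' r2' t2') ->
  k1 <> 0 ->
  toPrimed (block_sum c d p q X1 X2) = block_sum c d p q (primed_r1 k1 k2 k3 k4) X2.
Proof.
  intros H Hk1; extensionality r1; extensionality t1; extensionality r2; extensionality t2.
  rewrite H; unfold block_sum, compose2, aff_eval; simpl.
  f_equal; f_equal; field; auto.
Qed.

Lemma block_sum_shear c d p q La Lb l1 l2 x1 x2 x3 x4 :
  block_sum c d p q La Lb x1 (x2 - l1 * x3 - l2 * x4) x3 x4 =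
  block_sum c d p q (shear l1 l2 La) (shear l1 l2 Lb) x1 x2 x3 x4.
Proof. unfold block_sum, compose2, aff_eval; simpl; f_equal; f_equal; ring. Qed.

Lemma aff_eval_primed_r1 k1 k2 k3 k4 r1 t1 r2 t2 : k1 <> 0 ->
  aff_eval (primed_r1 k1 k2 k3 k4) (k1 * r1 + k2 * t1 + k3 * r2 + k4 * t2) t1 r2 t2 = r1.
Proof. intros Hk1; unfold aff_eval, primed_r1; simpl; field; auto. Qed.

Lemma aff_eval_shear l1 l2 L x1 x2 x3 x4 :
  aff_eval (shear l1 l2 L) x1 (x2 + l1 * x3 + l2 * x4) x3 x4 = aff_eval L x1 x2 x3 x4.
Proof. unfold aff_eval, shear; simpl; ring. Qed.

Lemma polar_Qre_pd p q mu j r1 t1 r2 t2 l : (1 <= j <= 4)%nat ->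
  pd j (polar (Qre p q mu)) r1 t1 r2 t2 l ->
  l = aff_coef X1 j * tpoly_r (qcoef mu) p r1 t1 + aff_coef X2 j * tpoly_t (qcoef mu) p r1 t1
      + (aff_coef X3 j * tpoly_r (qcoef (1, 0)) q r2 t2
         + aff_coef X4 j * tpoly_t (qcoef (1, 0)) q r2 t2).
Proof.
  intros Hj H. rewrite polar_Qre_block in H.
  destruct (aff_eval_coords r1 t1 r2 t2) as (E1 & E2 & _).
  exact (pd_unique _ _ _ _ _ _ _ _ H (pd_block_sum _ _ _ _ _ _ _ _ _ _ _ _ _ Hj E1 E2)).
Qed.

(** * The Hessian of [R - s Q] *)

Section HessianAlgebra.

Context {m R1 R2 P Q c1 s1 c2 c3 s3 e k1 k2 k3 k4 Urr Urt Utt Vrr Vrt Vtt : R}.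

(* Closed forms at the singular point of the data entering the Hessian of [R - s Q]: the [k_i],
   the second derivatives [U..] of the [u]-block and [V..] of the [v]-block, with
   [ci = cos Theta_i], [si = sin Theta_i], [e = (-1)^kappa], [P = p], [Q = q]. *)
Record hessian_data : Prop := {
  hd_k1 : k1 = 2 * m * c1 * c2;
  hd_k2 : k2 = - 2 * m * R1 * s1 * c2;
  hd_k3 : k3 = 2 * e * c3 * c2;
  hd_k4 : k4 = - 2 * e * R2 * s3 * c2;
  hd_Urr : R1 * c2 * Urr = m * (P - 1) * s1;
  hd_Urt : c2 * Urt = m * (P - 1) * c1;
  hd_Utt : c2 * Utt = - (m * R1 * (P - 1) * s1);
  hd_Vrr : R2 * (e * c2) * Vrr = (Q - 1) * s3;
  hd_Vrt : e * c2 * Vrt = (Q - 1) * c3;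
  hd_Vtt : e * c2 * Vtt = - (R2 * (Q - 1) * s3);
  hd_c1 : c1 ^ 2 + s1 ^ 2 = 1;
  hd_c3 : c3 ^ 2 + s3 ^ 2 = 1;
  hd_e : e * e = 1;
  hd_phi : e * (P - 1) * R2 * s3 + (Q - 1) * m * R1 * s1 = 0;
  hd_k1_neq0 : k1 <> 0;
  hd_R1_neq0 : R1 <> 0;
  hd_R2_neq0 : R2 <> 0;
  hd_P_neq1 : P - 1 <> 0 }.

Hypothesis HD : hessian_data.
Let Hk1 := hd_k1 HD.
Let Hk2 := hd_k2 HD.
Let Hk3 := hd_k3 HD.
Let Hk4 := hd_k4 HD.
Let HUrr := hd_Urr HD.
Let HUrt := hd_Urt HD.
Let HUtt := hd_Utt HD.
Let HVrr := hd_Vrr HD.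
Let HVrt := hd_Vrt HD.
Let HVtt := hd_Vtt HD.
Let Hc1 := hd_c1 HD.
Let Hc3 := hd_c3 HD.
Let He := hd_e HD.
Let Hphi := hd_phi HD.
Let Hk1nz := hd_k1_neq0 HD.
Let HR1 := hd_R1_neq0 HD.
Let HR2 := hd_R2_neq0 HD.
Let HP := hd_P_neq1 HD.

Let H11 := 4 * (P - 1) * m ^ 3 * R1 * s1 * c2 / k1 ^ 2.
Let a2 := - k2 / k1.

Lemma k1_factors_nonzero : m <> 0 /\ c1 <> 0 /\ c2 <> 0.
Proof. repeat split; intro Z; apply Hk1nz; rewrite Hk1, Z; ring. Qed.

Lemma primed_kernel : a2 * Urt + Utt = 0.
Proof.
  destruct k1_factors_nonzero as (Hm & Hc1nz & Hc2nz).
  apply (Rmult_eq_reg_l (c1 * c2)); [|apply Rmult_integral_contrapositive; tauto].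
  transitivity (R1 * s1 * (c2 * Urt) + c1 * (c2 * Utt)).
  { unfold a2; rewrite Hk1, Hk2; field; tauto. }
  rewrite HUrt, HUtt; ring.
Qed.

Lemma primed_image : a2 * Urr + Urt = m * (P - 1) / (c1 * c2).
Proof.
  destruct k1_factors_nonzero as (Hm & Hc1nz & Hc2nz).
  apply (Rmult_eq_reg_l (c1 * c2)); [|apply Rmult_integral_contrapositive; tauto].
  transitivity (s1 * (R1 * c2 * Urr) + c1 * (c2 * Urt)).
  { unfold a2; rewrite Hk1, Hk2; field; tauto. }
  rewrite HUrr, HUrt.
  transitivity (m * (P - 1) * (c1 ^ 2 + s1 ^ 2)); [ring | rewrite Hc1; field; tauto].
Qed.

Lemma primed_hessian_11 : hess2 Urr Urt Utt a2 1 a2 1 + hess2 Vrr Vrt Vtt 0 0 0 0 = H11.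
Proof.
  destruct k1_factors_nonzero as (Hm & Hc1nz & Hc2nz).
  unfold hess2; rewrite !Rmult_1_l, primed_kernel, primed_image.
  unfold H11, a2; rewrite Hk2, Hk1; field; tauto.
Qed.

Lemma primed_hessian_ratio aj bj cj : H11 <> 0 ->
  (hess2 Urr Urt Utt a2 1 aj 0 + hess2 Vrr Vrt Vtt 0 0 bj cj)
  / (hess2 Urr Urt Utt a2 1 a2 1 + hess2 Vrr Vrt Vtt 0 0 0 0) = aj / a2.
Proof.
  intros HH. rewrite primed_hessian_11. unfold H11 in *.
  destruct k1_factors_nonzero as (Hm & Hc1nz & Hc2nz).
  assert (Hs1 : s1 <> 0) by (intro Z; apply HH; rewrite Z; field; auto).
  unfold hess2; rewrite !Rmult_1_l, primed_image.
  unfold a2; rewrite Hk2, Hk1; field; repeat split; tauto.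
Qed.

Let l1 := (- k3 / k1) / a2.
Let l2 := (- k4 / k1) / a2.

Lemma sign_cases : e = 1 \/ e = -1.
Proof. nra. Qed.

Lemma double_primed_hessian i j : H11 <> 0 -> (2 <= i <= 4)%nat -> (2 <= j <= 4)%nat ->
  hess2 Urr Urt Utt
    (aff_coef (shear l1 l2 (primed_r1 k1 k2 k3 k4)) i) (aff_coef (shear l1 l2 X2) i)
    (aff_coef (shear l1 l2 (primed_r1 k1 k2 k3 k4)) j) (aff_coef (shear l1 l2 X2) j)
  + hess2 Vrr Vrt Vtt (aff_coef X3 i) (aff_coef X4 i) (aff_coef X3 j) (aff_coef X4 j)
  = if Nat.eqb i j then
      match i with
      | 2%nat => H11
      | 3%nat => - (4 * (P - 1) ^ 2 * m ^ 2) / (k1 ^ 2 * H11)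
      | _ => 0
      end
    else 0.
Proof.
  intros HH Hi Hj.
  destruct k1_factors_nonzero as (Hm & Hc1nz & Hc2nz).
  assert (Hs1 : s1 <> 0) by (intro Z; apply HH; unfold H11; rewrite Z; field; auto).
  assert (He0 : e <> 0) by (intro Z; rewrite Z in He; lra).
  assert (EUrr : Urr = m * (P - 1) * s1 / (R1 * c2)) by (rewrite <- HUrr; field; auto).
  assert (EUrt : Urt = m * (P - 1) * c1 / c2) by (rewrite <- HUrt; field; auto).
  assert (EUtt : Utt = - (m * R1 * (P - 1) * s1) / c2) by (rewrite <- HUtt; field; auto).
  assert (EVrr : Vrr = (Q - 1) * s3 / (R2 * (e * c2))) by (rewrite <- HVrr; field; auto).
  assert (EVrt : Vrt = (Q - 1) * c3 / (e * c2)) by (rewrite <- HVrt; field; auto).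
  assert (EVtt : Vtt = - (R2 * (Q - 1) * s3) / (e * c2)) by (rewrite <- HVtt; field; auto).
  assert (EQ : Q - 1 = - e * (P - 1) * R2 * s3 / (m * R1 * s1))
    by (apply (Rmult_eq_reg_r (m * R1 * s1)); [field_simplify; auto; lra | auto]).
  destruct i as [|[|[|[|[|i]]]]]; try lia; destruct j as [|[|[|[|[|j]]]]]; try lia;
    simpl Nat.eqb; cbv iota; unfold shear, primed_r1, X2, X3, X4; simpl aff_coef.
  1: rewrite <- primed_hessian_11; unfold hess2, a2; ring.
  (* the [(r2'', r2'')] entry is the only one needing [c3 ^ 2 + s3 ^ 2 = 1] *)
  4: replace (- (4 * (P - 1) ^ 2 * m ^ 2) / (k1 ^ 2 * H11))
       with (- (4 * (P - 1) ^ 2 * m ^ 2) / (k1 ^ 2 * H11) * (c3 ^ 2 + s3 ^ 2))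
       by (rewrite Hc3; ring).
  all: unfold hess2, l1, l2, a2, H11;
    rewrite ?EUrr, ?EUrt, ?EUtt, ?EVrr, ?EVrt, ?EVtt, ?EQ, ?Hk1, ?Hk2, ?Hk3, ?Hk4;
    destruct sign_cases as [E | E]; rewrite E; field; repeat split; auto.
Qed.

End HessianAlgebra.

Lemma primed_block_hessian {m R1 R2 P Q c1 s1 c2 c3 s3 e k1 k2 k3 k4 : R} c d p q x1 x2 x3 x4
    h11 h12 h13 :
  @hessian_data m R1 R2 P Q c1 s1 c2 c3 s3 e k1 k2 k3 k4
    (tpoly_rr c p R1 x2) (tpoly_rt c p R1 x2) (tpoly_tt c p R1 x2)
    (tpoly_rr d q x3 x4) (tpoly_rt d q x3 x4) (tpoly_tt d q x3 x4) ->
  aff_eval (primed_r1 k1 k2 k3 k4) x1 x2 x3 x4 = R1 ->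
  pd2 2 2 (block_sum c d p q (primed_r1 k1 k2 k3 k4) X2) x1 x2 x3 x4 h11 ->
  pd2 2 3 (block_sum c d p q (primed_r1 k1 k2 k3 k4) X2) x1 x2 x3 x4 h12 ->
  pd2 2 4 (block_sum c d p q (primed_r1 k1 k2 k3 k4) X2) x1 x2 x3 x4 h13 ->
  h11 <> 0 ->
  h11 = 4 * (P - 1) * m ^ 3 * R1 * s1 * c2 / k1 ^ 2 /\
  h12 / h11 = (- k3 / k1) / (- k2 / k1) /\ h13 / h11 = (- k4 / k1) / (- k2 / k1).
Proof.
  intros D Hpt H11 H12 H13 Hnz.
  destruct (aff_eval_coords x1 x2 x3 x4) as (_ & Hpt2 & _).
  pose proof (fun i j Hi Hj => pd2_block_sum c d p q _ _ i j _ _ _ _ _ _ Hi Hj Hpt Hpt2) as Hpd2.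
  rewrite (pd2_unique _ _ _ _ _ _ _ _ _ H11 (Hpd2 2%nat 2%nat ltac:(lia) ltac:(lia))) in Hnz |- *.
  rewrite (pd2_unique _ _ _ _ _ _ _ _ _ H12 (Hpd2 2%nat 3%nat ltac:(lia) ltac:(lia))),
    (pd2_unique _ _ _ _ _ _ _ _ _ H13 (Hpd2 2%nat 4%nat ltac:(lia) ltac:(lia))).
  simpl aff_coef in Hnz |- *. rewrite (primed_hessian_11 D) in Hnz.
  split; [apply (primed_hessian_11 D) | split; apply (primed_hessian_ratio D); exact Hnz].
Qed.

Lemma double_primed_block_hessian {m R1 R2 P Q c1 s1 c2 c3 s3 e k1 k2 k3 k4 : R} c d p q
    x1 x2 x3 x4 l1 l2 i j :
  @hessian_data m R1 R2 P Q c1 s1 c2 c3 s3 e k1 k2 k3 k4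
    (tpoly_rr c p R1 x2) (tpoly_rt c p R1 x2) (tpoly_tt c p R1 x2)
    (tpoly_rr d q x3 x4) (tpoly_rt d q x3 x4) (tpoly_tt d q x3 x4) ->
  aff_eval (primed_r1 k1 k2 k3 k4) x1 x2 x3 x4 = R1 ->
  4 * (P - 1) * m ^ 3 * R1 * s1 * c2 / k1 ^ 2 <> 0 ->
  l1 = (- k3 / k1) / (- k2 / k1) -> l2 = (- k4 / k1) / (- k2 / k1) ->
  (2 <= i <= 4)%nat -> (2 <= j <= 4)%nat ->
  pd2 i j (block_sum c d p q (shear l1 l2 (primed_r1 k1 k2 k3 k4)) (shear l1 l2 X2))
    x1 (x2 + l1 * x3 + l2 * x4) x3 x4
    (if Nat.eqb i j then
       match i with
       | 2%nat => 4 * (P - 1) * m ^ 3 * R1 * s1 * c2 / k1 ^ 2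
       | 3%nat =>
           - (4 * (P - 1) ^ 2 * m ^ 2) / (k1 ^ 2 * (4 * (P - 1) * m ^ 3 * R1 * s1 * c2 / k1 ^ 2))
       | _ => 0
       end
     else 0).
Proof.
  intros D Hpt Hnz -> -> Hi Hj.
  rewrite <- (double_primed_hessian D i j Hnz Hi Hj).
  apply pd2_block_sum; try lia; rewrite aff_eval_shear; [exact Hpt | apply aff_eval_coords].
Qed.

(** * The singular point *)

Lemma one_polar : ((1, 0) : cplx) = (1 * cos 0, 1 * sin 0).
Proof. rewrite cos_0, sin_0; f_equal; ring. Qed.

Section SingularPoint.

Context {p q : nat} {mu : cplx} {R1 R2 argu argv argmu : R} {kappa : Z}.
Hypothesis hp : (2 <= p)%nat.
Hypothesis hq : (2 <= q)%nat.
Hypothesis Hu : INR p * R1 ^ pred p = 1.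
Hypothesis Hv : INR q * R2 ^ pred q = 1.
Hypothesis hargmu : mu = (Cabs mu * cos argmu, Cabs mu * sin argmu).
Hypothesis hkappa : (INR p - 1) / 2 * argu + argmu = (INR q - 1) / 2 * argv + IZR kappa * PI.

Let Theta1 := (INR p + 1) / 2 * argu.
Let Theta2 := (INR p - 1) / 2 * argu + argmu.
Let Theta3 := (INR q + 1) / 2 * argv.
(* [Theta2] of the [v]-block, whose coefficient is [1 = 1 * e^(i 0)] *)
Let Psi := (INR q - 1) / 2 * argv + 0.
Let e := powerRZ (-1) kappa.

Lemma Psi_shift : cos Psi = e * cos Theta2 /\ sin Psi = e * sin Theta2.
Proof. apply cos_sin_unshift; unfold Psi, Theta2; lra. Qed.

Lemma polar_Qre_partials_crit k1 k2 k3 k4 :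
  pd 1 (polar (Qre p q mu)) R1 argu R2 argv k1 -> pd 2 (polar (Qre p q mu)) R1 argu R2 argv k2 ->
  pd 3 (polar (Qre p q mu)) R1 argu R2 argv k3 -> pd 4 (polar (Qre p q mu)) R1 argu R2 argv k4 ->
  k1 = 2 * Cabs mu * cos Theta1 * cos Theta2 /\ k2 = - 2 * Cabs mu * R1 * sin Theta1 * cos Theta2 /\
  k3 = 2 * e * cos Theta3 * cos Theta2 /\ k4 = - 2 * e * R2 * sin Theta3 * cos Theta2.
Proof.
  intros H1 H2 H3 H4. destruct Psi_shift as [Hc _].
  rewrite (polar_Qre_pd _ _ _ 1 _ _ _ _ _ ltac:(lia) H1),
    (polar_Qre_pd _ _ _ 2 _ _ _ _ _ ltac:(lia) H2),
    (polar_Qre_pd _ _ _ 3 _ _ _ _ _ ltac:(lia) H3),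
    (polar_Qre_pd _ _ _ 4 _ _ _ _ _ ltac:(lia) H4).
  simpl aff_coef.
  rewrite (tpoly_r_qcoef_crit p mu (Cabs mu) argmu R1 argu Theta1 Theta2 hargmu eq_refl eq_refl Hu),
    (tpoly_t_qcoef_crit p mu (Cabs mu) argmu R1 argu Theta1 Theta2 hargmu eq_refl eq_refl Hu hp),
    (tpoly_r_qcoef_crit q (1, 0) 1 0 R2 argv Theta3 Psi one_polar eq_refl eq_refl Hv),
    (tpoly_t_qcoef_crit q (1, 0) 1 0 R2 argv Theta3 Psi one_polar eq_refl eq_refl Hv hq), Hc.
  repeat split; ring.
Qed.

Lemma primed_slope_crit (toPrimed : Rfun4 -> Rfun4) k1 k2 k3 k4 s :
  (forall f r1' t1' r2' t2',
     toPrimed f r1' t1' r2' t2' = f ((r1' - k2 * t1' - k3 * r2' - k4 * t2') / k1) t1' r2' t2') ->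
  k1 = 2 * Cabs mu * cos Theta1 * cos Theta2 -> k1 <> 0 ->
  pd 1 (toPrimed (polar (Rim p q mu))) (k1 * R1 + k2 * argu + k3 * R2 + k4 * argv) argu R2 argv s ->
  s * cos Theta2 = sin Theta2.
Proof.
  intros HtoP K1 Hk1 Hs.
  rewrite polar_Rim_block, (block_sum_primed _ _ _ _ _ _ _ _ _ HtoP Hk1) in Hs.
  pose proof (aff_eval_primed_r1 k1 k2 k3 k4 R1 argu R2 argv Hk1) as Hpt.
  destruct (aff_eval_coords (k1 * R1 + k2 * argu + k3 * R2 + k4 * argv) argu R2 argv)
    as (_ & Hpt2 & _).
  rewrite (pd_unique _ _ _ _ _ _ _ _ Hs
    (pd_block_sum _ _ _ _ _ _ 1 _ _ _ _ _ _ ltac:(repeat constructor) Hpt Hpt2)).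
  simpl aff_coef.
  rewrite (tpoly_r_rcoef_crit p mu (Cabs mu) argmu R1 argu Theta1 Theta2 hargmu eq_refl eq_refl Hu).
  assert (Cabs mu <> 0 /\ cos Theta1 <> 0 /\ cos Theta2 <> 0) as (? & ? & ?)
    by (repeat split; intro Z; apply Hk1; rewrite K1, Z; ring).
  rewrite K1; field; auto.
Qed.

Lemma hessian_data_crit k1 k2 k3 k4 s :
  e * (INR p - 1) * R2 * sin Theta3 + (INR q - 1) * Cabs mu * R1 * sin Theta1 = 0 ->
  k1 = 2 * Cabs mu * cos Theta1 * cos Theta2 -> k2 = - 2 * Cabs mu * R1 * sin Theta1 * cos Theta2 ->
  k3 = 2 * e * cos Theta3 * cos Theta2 -> k4 = - 2 * e * R2 * sin Theta3 * cos Theta2 ->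
  k1 <> 0 -> s * cos Theta2 = sin Theta2 ->
  @hessian_data (Cabs mu) R1 R2 (INR p) (INR q) (cos Theta1) (sin Theta1) (cos Theta2)
    (cos Theta3) (sin Theta3) e k1 k2 k3 k4
    (tpoly_rr (hcoef s mu) p R1 argu) (tpoly_rt (hcoef s mu) p R1 argu)
    (tpoly_tt (hcoef s mu) p R1 argu) (tpoly_rr (hcoef s (1, 0)) q R2 argv)
    (tpoly_rt (hcoef s (1, 0)) q R2 argv) (tpoly_tt (hcoef s (1, 0)) q R2 argv).
Proof.
  intros Hphi K1 K2 K3 K4 Hk1 Hs. destruct Psi_shift as [Hc Hsn].
  assert (HsPsi : s * cos Psi = sin Psi) by (rewrite Hc, Hsn, <- Hs; ring).
  pose proof (tpoly_rr_hcoef_crit q (1, 0) 1 0 R2 argv Theta3 Psi one_polar eq_refl eq_refl Hv hq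
                s HsPsi) as Vrr.
  pose proof (tpoly_rt_hcoef_crit q (1, 0) 1 0 R2 argv Theta3 Psi one_polar eq_refl eq_refl Hv
                s HsPsi) as Vrt.
  pose proof (tpoly_tt_hcoef_crit q (1, 0) 1 0 R2 argv Theta3 Psi one_polar eq_refl eq_refl Hv hq
                s HsPsi) as Vtt.
  rewrite Hc, !Rmult_1_l in Vrr, Vrt, Vtt.
  split; auto using cos_sin_sqr.
  - exact (tpoly_rr_hcoef_crit p mu (Cabs mu) argmu R1 argu Theta1 Theta2 hargmu eq_refl eq_refl
             Hu hp s Hs).
  - exact (tpoly_rt_hcoef_crit p mu (Cabs mu) argmu R1 argu Theta1 Theta2 hargmu eq_refl eq_refl
             Hu s Hs).
  - exact (tpoly_tt_hcoef_crit p mu (Cabs mu) argmu R1 argu Theta1 Theta2 hargmu eq_refl eq_refl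
             Hu hp s Hs).
  - apply sign_IZR_PI_sqr.
  - exact (crit_radius_neq0 p R1 hp Hu).
  - exact (crit_radius_neq0 q R2 hq Hv).
  - apply le_INR in hp; simpl in hp; lra.
Qed.

End SingularPoint.

Theorem lemma3p11
  (p q : nat) (hp : (2 <= p)%nat) (hq : (2 <= q)%nat)
  (mu : cplx) (hmu : mu <> (0, 0))
  (u0 v0 : cplx)
  (hsing : singular_point p q mu (fst u0) (snd u0) (fst v0) (snd v0))
  (* real representatives of the arguments *)
  (argu argv argmu : R)
  (hargu : u0 = (Cabs u0 * cos argu, Cabs u0 * sin argu))
  (hargv : v0 = (Cabs v0 * cos argv, Cabs v0 * sin argv))
  (hargmu : mu = (Cabs mu * cos argmu, Cabs mu * sin argmu))
  (kappa : Z)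
  (hkappa : (INR p - 1) / 2 * argu + argmu = (INR q - 1) / 2 * argv + IZR kappa * PI)
  (* phi(z0) = 0 *)
  (hphi : powerRZ (-1) kappa * (INR p - 1) * Cabs v0 * sin ((INR q + 1) / 2 * argv)
          + (INR q - 1) * Cabs mu * Cabs u0 * sin ((INR p + 1) / 2 * argu) = 0)
  (* k_i = partial derivatives of Q in polar coordinates at z0 *)
  (k1 k2 k3 k4 : R)
  (hk1 : pd 1 (polar (Qre p q mu)) (Cabs u0) argu (Cabs v0) argv k1)
  (hk2 : pd 2 (polar (Qre p q mu)) (Cabs u0) argu (Cabs v0) argv k2)
  (hk3 : pd 3 (polar (Qre p q mu)) (Cabs u0) argu (Cabs v0) argv k3)
  (hk4 : pd 4 (polar (Qre p q mu)) (Cabs u0) argu (Cabs v0) argv k4)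
  (hk1nz : k1 <> 0)
  (* primed coordinates: r1' = k1 r1 + k2 th1 + k3 r2 + k4 th2, others unchanged;
     a function f(r1,th1,r2,th2) expressed in primed coordinates: *)
  (toPrimed : Rfun4 -> Rfun4)
  (htoPrimed : forall f r1' t1' r2' t2',
     toPrimed f r1' t1' r2' t2' = f ((r1' - k2 * t1' - k3 * r2' - k4 * t2') / k1) t1' r2' t2')
  (r1'0 : R) (hr1'0 : r1'0 = k1 * Cabs u0 + k2 * argu + k3 * Cabs v0 + k4 * argv)
  (* s = dR/dr1' (z0) *)
  (s : R)
  (hs : pd 1 (toPrimed (polar (Rim p q mu))) r1'0 argu (Cabs v0) argv s)
  (* hat R = R - s Q *)
  (Rhat : Rfun4)
  (hRhat : forall r1 t1 r2 t2,
     Rhat r1 t1 r2 t2 = polar (Rim p q mu) r1 t1 r2 t2 - s * polar (Qre p q mu) r1 t1 r2 t2)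
  (* second partials of hat R in primed coordinates at z0 *)
  (h11 h12 h13 : R)
  (hh11 : pd2 2 2 (toPrimed Rhat) r1'0 argu (Cabs v0) argv h11)
  (hh12 : pd2 2 3 (toPrimed Rhat) r1'0 argu (Cabs v0) argv h12)
  (hh13 : pd2 2 4 (toPrimed Rhat) r1'0 argu (Cabs v0) argv h13)
  (hh11nz : h11 <> 0)
  (l1 l2 : R) (hl1 : l1 = h12 / h11) (hl2 : l2 = h13 / h11)
  (* double-primed coordinates: th1'' = th1' + l1 r2' + l2 th2', others unchanged *)
  (Rhat'' : Rfun4)
  (hRhat'' : forall r1'' t1'' r2'' t2'',
     Rhat'' r1'' t1'' r2'' t2'' = toPrimed Rhat r1'' (t1'' - l1 * r2'' - l2 * t2'') r2'' t2'')
  (t1''0 : R) (ht1''0 : t1''0 = argu + l1 * Cabs v0 + l2 * argv) :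
  let Theta1 := (INR p + 1) / 2 * argu in
  let Theta2 := (INR p - 1) / 2 * argu + argmu in
  let Hdiag := fun i : nat =>
    match i with
    | 2%nat => h11
    | 3%nat => - (4 * (INR p - 1) ^ 2 * Cabs mu ^ 2) / (k1 ^ 2 * h11)
    | _ => 0
    end in
  h11 = 4 * (INR p - 1) * Cabs mu ^ 3 * Cabs u0 * sin Theta1 * cos Theta2 / k1 ^ 2 /\
  (forall i j : nat, (2 <= i <= 4)%nat -> (2 <= j <= 4)%nat ->
     pd2 i j Rhat'' r1'0 t1''0 (Cabs v0) argv
       (if Nat.eqb i j then Hdiag i else 0)).
Proof.
  intros Theta1 Theta2 Hdiag.
  destruct (singular_point_moduli p q mu u0 v0 hmu hsing) as [Hu Hv].
  destruct (polar_Qre_partials_crit hp hq Hu Hv hargmu hkappa _ _ _ _ hk1 hk2 hk3 hk4)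
    as (K1 & K2 & K3 & K4).
  subst r1'0 t1''0.
  pose proof (primed_slope_crit Hu hargmu toPrimed _ _ _ _ _ htoPrimed K1 hk1nz hs) as Hs.
  pose proof (hessian_data_crit hp hq Hu Hv hargmu hkappa _ _ _ _ _ hphi K1 K2 K3 K4 hk1nz Hs) as D.
  assert (ERhat' : toPrimed Rhat =
                   block_sum (hcoef s mu) (hcoef s (1, 0)) p q (primed_r1 k1 k2 k3 k4) X2)
    by (rewrite (polar_hat_block _ _ _ _ _ hRhat); apply block_sum_primed; auto).
  rewrite ERhat' in hh11, hh12, hh13.
  pose proof (aff_eval_primed_r1 k1 k2 k3 k4 (Cabs u0) argu (Cabs v0) argv hk1nz) as Hpt.
  destruct (primed_block_hessian _ _ _ _ _ _ _ _ _ _ _ D Hpt hh11 hh12 hh13 hh11nz)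
    as (E11 & L1 & L2).
  split; [exact E11|].
  intros i j Hi Hj.
  assert (ERhat'' : Rhat'' = block_sum (hcoef s mu) (hcoef s (1, 0)) p q
                               (shear l1 l2 (primed_r1 k1 k2 k3 k4)) (shear l1 l2 X2)).
  { extensionality r1; extensionality t1; extensionality r2; extensionality t2.
    rewrite hRhat'', ERhat'; apply block_sum_shear. }
  unfold Hdiag; rewrite ERhat'', E11 in *.
  exact (double_primed_block_hessian _ _ _ _ _ _ _ _ _ _ _ _ D Hpt hh11nz
           (eq_trans hl1 L1) (eq_trans hl2 L2) Hi Hj).
Qed.
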